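(* Let $G=(V,W,E)$ be an odd bipartite graph with parts $V$ and $W$. Then there is some $V'\subseteq V$ with $|V'|\leq |W|$ such that the induced subgraph $G[V'\cup W]$ (with parts $V'$ and $W$) is odd.
   Context: A bipartite graph $G=(V,W,E)$ (with distinguished parts $V$, $W$) is called odd if for every nonempty $X\subseteq W$ there is some $v\in V$ such that $|X\cap N(v)|$ is odd, where $N(v)$ is the neighbourhood of $v$. *)

From mathcomp Require Import all_boot.
Set Implicit Arguments. Unset Strict Implicit. Unset Printing Implicit Defensive.

Definition nbhd (V W : finType) (e : V -> W -> bool) (v : V) : {set W} :=
  [set w | e v w].

(* The bipartite graph with parts Vs ⊆ V and W, edges e restricted to Vs × W
   (i.e. the induced subgraph G[Vs ∪ W]) is odd: every nonempty X ⊆ W has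
   some v ∈ Vs with |X ∩ N(v)| odd.  Note N(v) ⊆ W is unchanged by
   restricting the left part. *)
Definition odd_on (V W : finType) (e : V -> W -> bool) (Vs : {set V}) : Prop :=
  forall X : {set W}, X != set0 ->
    exists2 v : V, v \in Vs & odd #|X :&: nbhd e v|.

Definition odd_bigraph (V W : finType) (e : V -> W -> bool) : Prop :=
  odd_on e [set: V].

From mathcomp Require Import all_boot.
Set Implicit Arguments.
Unset Strict Implicit.

(* Over GF(2), map each A ⊆ V to the sum of the neighbourhoods of its
   vertices.  If |V| > |W| there are more subsets of V than of W, so two
   distinct A, B have the same image, and D = A Δ B is a nonempty set in
   which every w ∈ W has an even number of neighbours.  Then any v0 ∈ D can
   be deleted: if v0 was the only odd witness for X, the sum over v ∈ D of
   |X ∩ N(v)| counts the edges between D and X, which is even, so some other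
   v ∈ D is an odd witness.  Deleting vertices one at a time leaves |W|. *)

Lemma card_sets (T : finType) : #|{set T}| = 2 ^ #|T|.
Proof.
rewrite -cardsT -card_powerset; apply: eq_card => X.
by rewrite inE powersetE subsetT.
Qed.

Lemma odd_sum (I : finType) (P : pred I) (F : I -> nat) :
  odd (\sum_(i | P i) F i) = \big[addb/false]_(i | P i) odd (F i).
Proof. exact: (big_morph odd oddD). Qed.

Lemma odd_card_symdiff (T : finType) (A B : {set T}) :
  odd #|(A :\: B) :|: (B :\: A)| = odd #|A| (+) odd #|B|.
Proof.
have disjAB : (A :\: B) :&: (B :\: A) = set0.
  by apply/setP => x; rewrite !inE; case: (x \in A); case: (x \in B).
have := cardsUI (A :\: B) (B :\: A); rewrite disjAB cards0 addn0 => ->.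
rewrite -(cardsID B A) -(cardsID A B) setIC.
by rewrite !oddD addbACA addbb.
Qed.

Lemma card_sep_sum (T : finType) (A : {set T}) (p : pred T) :
  #|[set x in A | p x]| = \sum_(x in A) p x.
Proof.
rewrite -sum1_card big_mkcond [RHS]big_mkcond /=.
by apply: eq_bigr => x _; rewrite !inE; case: (x \in A); case: (p x).
Qed.

Section OddBigraph.
Variables (V W : finType) (e : V -> W -> bool).

Definition deg_in (A : {set V}) (w : W) : nat := #|[set v in A | e v w]|.

Definition parity_nbhd (A : {set V}) : {set W} := [set w | odd (deg_in A w)].

Lemma odd_deg_in_symdiff (A B : {set V}) w :
  odd (deg_in ((A :\: B) :|: (B :\: A)) w) = odd (deg_in A w) (+) odd (deg_in B w).
Proof.
rewrite /deg_in -odd_card_symdiff; congr odd; apply: eq_card => v.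
by rewrite !inE; case: (v \in A); case: (v \in B); case: (e v w).
Qed.

Lemma sum_card_setI_nbhd (D : {set V}) (X : {set W}) :
  \sum_(v in D) #|X :&: nbhd e v| = \sum_(w in X) deg_in D w.
Proof.
under eq_bigr => v _ do rewrite /nbhd -setIdE card_sep_sum.
by rewrite exchange_big; apply: eq_bigr => w _; rewrite /deg_in card_sep_sum.
Qed.

Lemma even_dependent_subset (Vs : {set V}) : #|W| < #|Vs| ->
  exists D : {set V}, [/\ D \subset Vs, D != set0 & forall w, ~~ odd (deg_in D w)].
Proof.
move=> ltWVs.
have /dinjectivePn [A] : ~~ dinjectiveb parity_nbhd (mem (powerset Vs)).
  apply/dinjectiveP => /leq_card_in.
  by rewrite card_powerset card_sets leq_exp2l // leqNgt ltWVs.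
rewrite powersetE => sAVs [B]; rewrite !inE => /andP [neqBA sBVs] eq_par.
exists ((A :\: B) :|: (B :\: A)); split.
- by rewrite subUset !(subset_trans (subsetDl _ _)).
- apply: contra neqBA => /eqP emptyD; apply/eqP/setP => v.
  by move/setP: emptyD => /(_ v); rewrite !inE; case: (v \in A); case: (v \in B).
- move=> w; have /setP /(_ w) := eq_par.
  by rewrite odd_deg_in_symdiff !inE => ->; rewrite addbb.
Qed.

Lemma odd_on_setD1 (Vs D : {set V}) (v0 : V) :
  D \subset Vs -> (forall w, ~~ odd (deg_in D w)) -> v0 \in D ->
  odd_on e Vs -> odd_on e (Vs :\ v0).
Proof.
move=> sDVs evenD Dv0 oddVs X nzX.
have [v Vsv oddXv] := oddVs X nzX.
have [eq_vv0 | neqv] := eqVneq v v0; last by exists v; rewrite ?inE ?neqv.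
subst v.
have evenDX : ~~ odd (\sum_(v in D) #|X :&: nbhd e v|).
  by rewrite sum_card_setI_nbhd odd_sum big1 // => w _; apply/negbTE.
have [v /andP [/andP [Dv neqv] oddv] | allEven] :=
  pickP [pred v | (v \in D) && (v != v0) & odd #|X :&: nbhd e v|].
  by exists v; rewrite // in_setD1 neqv (subsetP sDVs).
move: evenDX; rewrite (bigD1 v0) //= oddD oddXv odd_sum big1 // => v /andP [Dv neqv].
by have := allEven v; rewrite /= Dv neqv.
Qed.

Lemma odd_on_shrink (Vs : {set V}) : odd_on e Vs ->
  exists V' : {set V}, [/\ V' \subset Vs, #|V'| <= #|W| & odd_on e V'].
Proof.
elim: {Vs}#|Vs| {-2}Vs (leqnn #|Vs|) => [|n IHn] Vs leVsn oddVs.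
  by exists Vs; rewrite (leq_trans leVsn).
have [leVsW | ltWVs] := leqP #|Vs| #|W|; first by exists Vs.
have [D [sDVs /set0Pn [v0 Dv0] evenD]] := even_dependent_subset ltWVs.
have Vsv0 : v0 \in Vs := subsetP sDVs v0 Dv0.
have leVsn' : #|Vs :\ v0| <= n.
  by move: leVsn; rewrite (cardsD1 v0 Vs) Vsv0.
have [V' [sV' leV'W oddV']] := IHn _ leVsn' (odd_on_setD1 sDVs evenD Dv0 oddVs).
by exists V'; rewrite (subset_trans sV') ?subsetDl.
Qed.

End OddBigraph.

Theorem mainTheorem4 (V W : finType) (e : V -> W -> bool) :
  odd_bigraph e ->
  exists V' : {set V}, #|V'| <= #|W| /\ odd_on e V'.
Proof. by case/odd_on_shrink => V' [_ leV'W oddV']; exists V'. Qed.
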